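(* Let $(r_{i,j})_{i\ge 0,\, j\in\mathbb{Z}}$ be the Pascal rhombus, defined by $r_{0,0}=r_{1,-1}=r_{1,0}=r_{1,1}=1$, $r_{0,j}=0$ for $j\neq 0$, $r_{1,j}=0$ for $j\notin\{-1,0,1\}$, and $r_{i,j}=r_{i-1,j-1}+r_{i-1,j}+r_{i-1,j+1}+r_{i-2,j}$ for $i\ge 2$, $j\in\mathbb{Z}$. Then for all integers $i\ge 0$ and $j\ge 0$, $$r_{i,j}=\sum_{m=0}^{\lfloor (i-j)/2\rfloor}\binom{2m+j}{m}F^{(j+2m+1)}_{i-j-2m+1},$$ where $F^{(r)}_{k}$ are the convolved Fibonacci numbers.
   Context: For a positive integer $r$, the convolved Fibonacci numbers $F^{(r)}_{k}$ ($k\ge 1$) are defined by $(1-x-x^2)^{-r}=\sum_{k\ge 0}F^{(r)}_{k+1}x^k$. An empty sum (upper limit negative) equals $0$. *)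

From mathcomp Require Import all_boot all_order all_algebra.
Set Implicit Arguments. Unset Strict Implicit. Unset Printing Implicit Defensive.
Import GRing.Theory Num.Theory.
Local Open Scope ring_scope.

Fixpoint rhombus (i : nat) (j : int) : int :=
  match i with
  | 0%N => (j == 0)%:R
  | 1%N => ((j == -1) || (j == 0) || (j == 1))%:R
  | S ((S i'') as i') =>
      rhombus i' (j - 1) + rhombus i' j + rhombus i' (j + 1) + rhombus i'' j
  end.

(* Formal power series inverse of a series c with c 0 = 1:
   inv_pref c n = first n coefficients a_0..a_{n-1} of 1/(sum c_i x^i),
   determined by  sum_{i<=k} c_i a_{k-i} = [k == 0]. *)
Fixpoint inv_pref (c : nat -> int) (n : nat) : seq int :=
  match n with
  | 0%N => [::]
  | S n' => let s := inv_pref c n' in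
      rcons s ((n' == 0%N)%:R - \sum_(1 <= i < n'.+1) c i * nth 0 s (n' - i))
  end.

Definition inv_coef (c : nat -> int) (k : nat) : int := nth 0 (inv_pref c k.+1) k.

(* Convolved Fibonacci numbers:
   (1 - x - x^2)^(-r) = sum_{k>=0} convF r (k+1) x^k. *)
Definition convF (r k : nat) : int :=
  inv_coef (fun i => ((1 - 'X - 'X^2 : {poly int}) ^+ r)`_i) k.-1.

From mathcomp Require Import all_boot all_order all_algebra zify ring.
Import GRing.Theory Num.Theory.
Local Open Scope ring_scope.

(* Writing D(t) = 1 - t - t^2, the rhombus has generating function
   1 / (D(t) - t (y + 1/y)) = \sum_n t^n (y + 1/y)^n / D(t)^(n+1).
   Hence r_{i,j} = \sum_n w_{n,j} F^{(n+1)}_{i-n+1}, where w_{n,j} is the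
   coefficient of y^j in (y + 1/y)^n; it vanishes unless n = j + 2m, in which
   case it is C(j+2m, m).  Instead of manipulating bivariate series, the
   identity is proved by induction on i from the rhombus recurrence, using
   w_{n+1,j} = w_{n,j-1} + w_{n,j+1} and D^(-n) = D * D^(-(n+1)). *)

Lemma size_inv_pref c n : size (inv_pref c n) = n.
Proof. by elim: n => //= n IH; rewrite size_rcons IH. Qed.

Lemma nth_inv_pref c n k : (k < n)%N -> nth 0 (inv_pref c n) k = inv_coef c k.
Proof.
elim: n => // n IH; rewrite ltnS leq_eqVlt => /orP[/eqP->|lt] //.
by rewrite /= nth_rcons size_inv_pref lt IH.
Qed.

Lemma inv_coefE c k : inv_coef c k =
  (k == 0%N)%:R - \sum_(1 <= i < k.+1) c i * inv_coef c (k - i).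
Proof.
rewrite /inv_coef /= nth_rcons size_inv_pref ltnn eqxx; congr (_ - _).
by apply: eq_big_nat => i /andP[i1 ik]; rewrite nth_inv_pref //; lia.
Qed.

Lemma inv_coef_conv c k : c 0%N = 1 ->
  \sum_(i < k.+1) c i * inv_coef c (k - i) = (k == 0%N)%:R.
Proof.
move=> c0; rewrite big_ord_recl c0 mul1r subn0 [inv_coef c k]inv_coefE.
by rewrite big_add1 big_mkord subrK.
Qed.

Lemma inv_coef_unique c b K : c 0%N = 1 ->
  (forall k, (k <= K)%N -> \sum_(i < k.+1) c i * b (k - i)%N = (k == 0%N)%:R) ->
  forall k, (k <= K)%N -> b k = inv_coef c k.
Proof.
move=> c0 b_conv; elim/ltn_ind => k IH kK.
have := b_conv k kK; rewrite -(inv_coef_conv c k c0) !big_ord_recl c0 !mul1r !subn0.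
have tailE : \sum_(i < k) c (bump 0 i) * b (k - bump 0 i)%N =
             \sum_(i < k) c (bump 0 i) * inv_coef c (k - bump 0 i)%N.
  by apply: eq_bigr => i _; have := ltn_ord i; rewrite /bump => ?; rewrite IH //; lia.
by rewrite tailE => /addIr.
Qed.

Definition fibD : {poly int} := 1 - 'X - 'X^2.

Definition cfib (r k : nat) : int := convF r k.+1.

Lemma coef0_fibD_exp r : (fibD ^+ r)`_0 = 1.
Proof.
elim: r => [|r IH]; first by rewrite expr0 coefC.
by rewrite exprS coef0M IH mulr1 /fibD !coefE.
Qed.

Lemma cfib0k k : cfib 0 k = (k == 0%N)%:R.
Proof.
symmetry; apply: (@inv_coef_unique _ (fun k => (k == 0%N)%:R) k (coef0_fibD_exp 0)) => //.
move=> k' _; rewrite big_ord_recl expr0 coefC mul1r subn0 big1 ?addr0 // => i _.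
by rewrite coefC mul0r.
Qed.

Lemma cfibr0 r : cfib r 0 = 1.
Proof. by rewrite /cfib /convF inv_coefE big_geq // subr0. Qed.

(* Comparing coefficients in D^(-n) = D * D^(-(n+1)). *)
Lemma cfibSr n k : cfib n k = cfib n.+1 k
  - (if k is k'.+1 then cfib n.+1 k' else 0)
  - (if k is k'.+2 then cfib n.+1 k' else 0).
Proof.
set g := fun k => cfib n.+1 k - (if k is k'.+1 then cfib n.+1 k' else 0)
  - (if k is k'.+2 then cfib n.+1 k' else 0).
rewrite -/(g k); symmetry.
apply: (@inv_coef_unique _ g k (coef0_fibD_exp n)) => // k' k'k.
set P := \poly_(i < k.+1) cfib n.+1 i.
have gE m : (m <= k)%N -> g m = (fibD * P)`_m.
  move=> mk; rewrite /fibD !mulrBl mul1r !coefE.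
  case: m mk => [|[|m]] mk /=; rewrite /g ?ltnS ?mk /= ?subr0 //.
  by rewrite subn2 !ifT //; lia.
transitivity (\sum_(i < k'.+1) (fibD ^+ n)`_i * (fibD * P)`_(k' - i)).
  by apply: eq_bigr => i _; rewrite gE // (leq_trans (leq_subr _ _)).
rewrite -coefM mulrA -exprSr coefM -(inv_coef_conv _ k' (coef0_fibD_exp n.+1)).
apply: eq_bigr => i _; rewrite coef_poly ifT //.
by rewrite ltnS (leq_trans (leq_subr _ _)).
Qed.

Definition cfibz r (k : int) : int := if k is Posz k then cfib r k else 0.

Lemma cfibz_neg r k : k < 0 -> cfibz r k = 0.
Proof. by case: k. Qed.

Lemma cfibzS n k : cfibz n.+1 k = cfibz n k + cfibz n.+1 (k - 1) + cfibz n.+1 (k - 2).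
Proof.
case: k => [m|m]; last by rewrite !cfibz_neg //; lia.
case: m => [|[|m]].
- by rewrite (@cfibz_neg _ (0 - 1)) // (@cfibz_neg _ (0 - 2)) // /cfibz !cfibr0 !addr0.
- rewrite (@cfibz_neg _ (1 - 2)) // (_ : Posz 1 - 1 = 0) // /cfibz (cfibSr n 1); ring.
- have -> : Posz m.+2 - 1 = m.+1 by lia.
  have -> : Posz m.+2 - 2 = m by lia.
  rewrite /cfibz (cfibSr n m.+2); ring.
Qed.

(* [walks n j]: the number of +-1 walks of length n from 0 to j, i.e. the
   coefficient of y^j in (y + 1/y)^n; k counts the down steps. *)
Definition walks n (j : int) : int :=
  \sum_(k < n.+1) (n%:Z == (2 * k)%:Z + j)%:R * ('C(n, k))%:R.

Lemma walks0 j : walks 0 j = (j == 0)%:R.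
Proof.
rewrite /walks big_ord1 bin0 mulr1 /=; congr (nat_of_bool _)%:R.
by apply/eqP/eqP => ?; lia.
Qed.

Lemma walksS n j : walks n.+1 j = walks n (j - 1) + walks n (j + 1).
Proof.
have lhsE : walks n.+1 j = (n.+1%:Z == j)%:R + \sum_(k < n.+1)
    (n.+1%:Z == (2 * k.+1)%:Z + j)%:R * ('C(n, k.+1) + 'C(n, k))%:R.
  by rewrite /walks big_ord_recl /= muln0 add0r bin0 mulr1.
have leftE : walks n (j - 1) = (n%:Z == j - 1)%:R + \sum_(k < n)
    (n%:Z == (2 * k.+1)%:Z + (j - 1))%:R * ('C(n, k.+1))%:R.
  by rewrite /walks big_ord_recl /= muln0 add0r bin0 mulr1.
have rightE : walks n (j + 1) = \sum_(k < n.+1)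
    (n.+1%:Z == (2 * k.+1)%:Z + j)%:R * ('C(n, k))%:R.
  by apply: eq_bigr => k _; congr ((nat_of_bool _)%:R * _); apply/eqP/eqP => ?; lia.
rewrite lhsE leftE rightE; under eq_bigr do rewrite natrD mulrDr.
rewrite big_split /= addrA big_ord_recr /= bin_small // mulr0 addr0.
congr (_ + _ + _); first by congr (nat_of_bool _)%:R; apply/eqP/eqP => ?; lia.
by apply: eq_bigr => k _; congr ((nat_of_bool _)%:R * _); apply/eqP/eqP => ?; lia.
Qed.

Lemma walks_gt n (j : nat) : (n < j)%N -> walks n j = 0.
Proof.
move=> lt; rewrite /walks big1 // => k _.
by rewrite (_ : (_ == _) = false) ?mul0r //; apply/eqP; lia.
Qed.

Lemma walks_odd (j m : nat) : walks (j + 2 * m).+1 j = 0.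
Proof.
rewrite /walks big1 // => k _.
by rewrite (_ : (_ == _) = false) ?mul0r //; apply/eqP; lia.
Qed.

Lemma walks_even (j m : nat) : walks (j + 2 * m) j = ('C(j + 2 * m, m))%:R.
Proof.
have mlt : (m < (j + 2 * m).+1)%N by lia.
rewrite /walks (bigD1 (Ordinal mlt)) //= big1 ?addr0.
  by rewrite (_ : (_ == _) = true) ?mul1r //; apply/eqP; lia.
move=> k /eqP kNm; rewrite (_ : (_ == _) = false) ?mul0r //.
by apply/eqP => ?; apply: kNm; apply: val_inj => /=; lia.
Qed.

Lemma big_ord_trunc {R : nmodType} (g : nat -> R) {N0 N : nat} : (N0 <= N)%N ->
  (forall m, (N0 <= m < N)%N -> g m = 0) ->
  \sum_(m < N) g m = \sum_(m < N0) g m.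
Proof.
move=> le g0; rewrite -!(big_mkord xpredT) (big_cat_nat (leq0n N0) le) /=.
by rewrite [X in _ + X]big1_seq ?addr0 // => m; rewrite mem_index_iota => /andP[_ /g0].
Qed.

Definition rhombus_sum i j N := \sum_(n < N) walks n j * cfibz n.+1 (i%:Z - n%:Z).

Lemma rhombus_sum_widen i j N : (i < N)%N -> rhombus_sum i j N = rhombus_sum i j i.+1.
Proof.
move=> lt; apply: (big_ord_trunc (fun n => walks n j * cfibz n.+1 (i%:Z - n%:Z)) lt).
by move=> m /andP[im _]; rewrite cfibz_neg ?mulr0 //; lia.
Qed.

Lemma rhombusSS p j : rhombus p.+2 j =
  rhombus p.+1 (j - 1) + rhombus p.+1 j + rhombus p.+1 (j + 1) + rhombus p j.
Proof. by []. Qed.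

Lemma rhombus_walks i j : rhombus i j = rhombus_sum i j i.+1.
Proof.
elim/ltn_ind: i j => -[|[|p]] IH j.
- by rewrite /rhombus_sum big_ord1 walks0 /= addn0 cfibr0 mulr1.
- rewrite /rhombus_sum !big_ord_recr big_ord0 /= walksS !walks0 add0r.
  rewrite addn0 subnn (_ : cfib 1 1 = 1) ?cfibr0 ?mulr1; last first.
    by have := cfibSr 0 1; rewrite cfib0k cfibr0 /=; lia.
  by case: j => [[|[|m]]|[|m]].
- have widen q j' : (q <= p.+1)%N -> rhombus_sum q j' q.+1 = rhombus_sum q j' p.+3.
    by move=> ?; rewrite rhombus_sum_widen //; lia.
  rewrite rhombusSS !IH // !(widen p.+1) // (widen p) //.
  have splitS : rhombus_sum p.+2 j p.+3 =
      \sum_(n < p.+3) walks n j * cfibz n (p.+2%:Z - n%:Z)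
      + rhombus_sum p.+1 j p.+3 + rhombus_sum p j p.+3.
    rewrite /rhombus_sum -!big_split /=; apply: eq_bigr => n _.
    rewrite cfibzS -!mulrDr; congr (_ * (_ + cfibz _ _ + cfibz _ _)); lia.
  have shiftS : \sum_(n < p.+3) walks n j * cfibz n (p.+2%:Z - n%:Z) =
      rhombus_sum p.+1 (j - 1) p.+3 + rhombus_sum p.+1 (j + 1) p.+3.
    rewrite /rhombus_sum -big_split big_ord_recl /= addn0 cfib0k mulr0 add0r.
    rewrite [RHS]big_ord_recr /= cfibz_neg ?mulr0 ?addr0; last lia.
    by apply: eq_bigr => n _; rewrite -mulrDl -walksS /bump /= add1n; congr (_ * cfibz _ _); lia.
  rewrite splitS shiftS; ring.
Qed.

Lemma rhombus_sum_binomial (j i M : nat) :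
  rhombus_sum i j (j + 2 * M) =
  \sum_(m < M) ('C(j + 2 * m, m))%:R * cfibz (j + 2 * m).+1 (i%:Z - (j + 2 * m)%:Z).
Proof.
elim: M => [|M IH].
  by rewrite /rhombus_sum big_ord0 muln0 addn0 big1 // => n _; rewrite walks_gt ?mul0r.
rewrite /rhombus_sum (_ : j + 2 * M.+1 = (j + 2 * M).+2)%N; last lia.
by rewrite !big_ord_recr /= walks_odd mul0r addr0 -IH walks_even.
Qed.

Theorem corollary2p5 (i j : nat) :
  rhombus i j%:Z =
  \sum_(m < (if (j <= i)%N then ((i - j)./2).+1 else 0%N))
     ('C(2 * m + j, m))%:R * convF (j + 2 * m + 1) (i - j - 2 * m + 1).
Proof.
rewrite rhombus_walks -(@rhombus_sum_widen i j (j + 2 * i.+1)); last lia.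
rewrite rhombus_sum_binomial.
set M := (if (j <= i)%N then _ else _).
have half := odd_double_half (i - j); have oddb := leq_b1 (odd (i - j)).
rewrite -muln2 in half.
have ltME m : (m < M)%N = (j + 2 * m <= i)%N by rewrite /M; case: ifP; lia.
rewrite (big_ord_trunc (fun m => 'C(j + 2 * m, m)%:R
    * cfibz (j + 2 * m).+1 (i%:Z - (j + 2 * m)%:Z)) (N0 := M)); first last.
- by move=> m /andP[]; rewrite leqNgt ltME => ? _; rewrite cfibz_neg ?mulr0 //; lia.
- by rewrite /M; case: ifP; lia.
apply: eq_bigr => m _; have := ltn_ord m; rewrite ltME => le.
by rewrite subzn //= /cfib !addn1 -subnDA [(2 * m + j)%N]addnC.
Qed.
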